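(* Let $\gamma=(\gamma_1,\gamma_2)\ge(0,0)$, $\varkappa\ge0$, and $\tilde\gamma\in\mathbb R^2$ with $-\gamma\le\tilde\gamma\le\gamma$. If $A\in\mathcal M_{\gamma,\varkappa}$ and $\zeta\in Y_{\tilde\gamma}$, then $A\zeta$, defined by $(A\zeta)_a=\sum_{b\in\mathcal L}A_a^b\zeta_b$, is well defined (the series converge), $A\zeta\in Y_{\tilde\gamma}$, and $$\|A\zeta\|_{\tilde\gamma}\le|A|_{\gamma,\varkappa}\,\|\zeta\|_{\tilde\gamma}.$$
   Context: Let $d_*\ge1$ and $\mathcal L\subset\mathbb Z^{d_*}$. For $a\in\mathbb Z^{d_*}$, $\langle a\rangle=\max(|a|,1)$ and $[a-b]=\min(|a-b|,|a+b|)$; pairs in $\mathbb R^2$ are ordered componentwise. For $\gamma=(\gamma_1,\gamma_2)\in\mathbb R^2$, $Y_\gamma$ is the space of sequences $\zeta=(\zeta_a)_{a\in\mathcal L}\in(\mathbb C^2)^{\mathcal L}$ with $\|\zeta\|_\gamma^2=\sum_{a\in\mathcal L}|\zeta_a|^2e^{2\gamma_1|a|}\langle a\rangle^{2\gamma_2}<\infty$ ($|\cdot|$ the Hermitian norm on $\mathbb C^2$). For $\varkappa\ge0$ let $e_{\gamma,\varkappa}(a,b)=C\,e^{\gamma_1[a-b]}\max([a-b],1)^{\gamma_2}\min(\langle a\rangle,\langle b\rangle)^{\varkappa}$, where $C\ge1$ is a fixed constant taken sufficiently large depending only on $\gamma_2,\varkappa$ (standing assumption). For a matrix $A=(A_a^b)_{a,b\in\mathcal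 L}$ of complex $2\times 2$ blocks, $|A|_{\gamma,\varkappa}=\max\{\sup_a\sum_b\|A_a^b\|e_{\gamma,\varkappa}(a,b),\ \sup_b\sum_a\|A_a^b\|e_{\gamma,\varkappa}(a,b)\}$ (operator norms of the blocks), and $\mathcal M_{\gamma,\varkappa}$ is the space of such matrices with finite norm. *)

From HB Require Import structures.
From mathcomp Require Import all_boot all_order all_algebra.
From mathcomp Require Import complex.
From mathcomp Require Import all_classical all_reals all_analysis.
From mathcomp Require Import Rstruct Rstruct_topology.
From Stdlib Require Import Rdefinitions.

Set Implicit Arguments.
Unset Strict Implicit.
Unset Printing Implicit Defensive.

Import Order.TTheory GRing.Theory Num.Theory.
Local Open Scope classical_set_scope.
Local Open Scope ring_scope.

Notation Zd d := 'rV[int]_d.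
Notation C2 := 'cV[R[i]]_2.
Notation M2 := 'M[R[i]]_2.

Definition zabs (d : nat) (a : Zd d) : R :=
  Num.sqrt (\sum_(i < d) ((a ord0 i)%:~R : R) ^+ 2).

Definition zbr (d : nat) (a : Zd d) : R := Num.max (zabs a) 1.

Definition zdist (d : nat) (a b : Zd d) : R :=
  Num.min (zabs (a - b)) (zabs (a + b)).

Definition hnorm (v : C2) : R :=
  Num.sqrt (\sum_(i < 2) ((@complex.Re R (v i ord0)) ^+ 2 + (@complex.Im R (v i ord0)) ^+ 2)).

Definition opnorm (M : M2) : R :=
  sup [set hnorm (M *m v) | v in [set v : C2 | hnorm v <= 1]].

Definition eweight (C g1 g2 kappa : R) (d : nat) (a b : Zd d) : R :=
  C * expR (g1 * zdist a b) * (Num.max (zdist a b) 1) `^ g2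
    * (Num.min (zbr a) (zbr b)) `^ kappa.

Definition ynorm2 (g1 g2 : R) (d : nat) (L : set (Zd d)) (z : Zd d -> C2)
  : \bar R :=
  \esum_(a in L) ((hnorm (z a)) ^+ 2 * expR (2 * g1 * zabs a)
                   * (zbr a) `^ (2 * g2))%:E.

Definition inY (g1 g2 : R) (d : nat) (L : set (Zd d)) (z : Zd d -> C2) : Prop :=
  (ynorm2 g1 g2 L z < +oo)%E.

(* ||zeta||_gamma (meaningful when inY) *)
Definition ynorm (g1 g2 : R) (d : nat) (L : set (Zd d)) (z : Zd d -> C2) : R :=
  Num.sqrt (fine (ynorm2 g1 g2 L z)).

(* |A|_{gamma,kappa} as an extended real; A a b is the block A_a^b *)
Definition mnormE (C g1 g2 kappa : R) (d : nat) (L : set (Zd d))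
  (A : Zd d -> Zd d -> M2) : \bar R :=
  maxe
    (ereal_sup [set (\esum_(b in L) (opnorm (A a b) * eweight C g1 g2 kappa a b)%:E)
               | a in L])
    (ereal_sup [set (\esum_(a in L) (opnorm (A a b) * eweight C g1 g2 kappa a b)%:E)
               | b in L]).

Definition inM (C g1 g2 kappa : R) (d : nat) (L : set (Zd d))
  (A : Zd d -> Zd d -> M2) : Prop :=
  (mnormE C g1 g2 kappa L A < +oo)%E.

Definition mnorm (C g1 g2 kappa : R) (d : nat) (L : set (Zd d))
  (A : Zd d -> Zd d -> M2) : R :=
  fine (mnormE C g1 g2 kappa L A).

Definition HasSum (T : choiceType) (L : set T) (f : T -> C2) (s : C2) : Prop :=
  forall eps : R, 0 < eps ->
    exists F0 : set T, [/\ finite_set F0, F0 `<=` L &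
      forall F : set T, finite_set F -> F0 `<=` F -> F `<=` L ->
        hnorm (\sum_(b \in F) f b - s) < eps].

From HB Require Import structures.
From mathcomp Require Import all_boot all_order all_algebra.
From mathcomp Require Import complex.
From mathcomp Require Import all_classical all_reals all_analysis.
From mathcomp Require Import Rstruct Rstruct_topology.
From Stdlib Require Import Rdefinitions.
From mathcomp Require Import ring lra.
Import Order.TTheory GRing.Theory Num.Theory Normc.
Local Open Scope classical_set_scope.
Local Open Scope ring_scope.
Set Implicit Arguments. Unset Strict Implicit. Unset Printing Implicit Defensive.

Local Notation sqrt := Num.sqrt.

(* Schur's test in weighted l^2.  With W a = e^(t1 |a|) <a>^t2, the inequality
   | |a| - |b| | <= [a-b] and Peetre's inequality
   <a>^t2 <= 2^g2 max([a-b],1)^g2 <b>^t2 give W a <= e(a,b) W b once C >= 2^g2,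
   so |A_a^b zeta_b| W a <= K a b y b with K a b = |A_a^b| e(a,b) and
   y b = |zeta_b| W b.  Cauchy-Schwarz against the row sums of K gives
   (sum_b K a b y b)^2 <= |A| sum_b K a b y b^2, and summing over a with the
   column bound gives ||A zeta||^2 <= |A|^2 ||zeta||^2.  Each row series is
   absolutely summable, hence converges coordinatewise. *)

Section FiniteSums.
Variables (F : rcfType) (T : Type) (r : seq T).

Lemma cauchy_schwarz_seq (u v : T -> F) :
  (\sum_(x <- r) u x * v x) ^+ 2 <= (\sum_(x <- r) u x ^+ 2) * (\sum_(x <- r) v x ^+ 2).
Proof.
set P := \sum_(x <- r) u x ^+ 2; set Q := \sum_(x <- r) u x * v x.
set S := \sum_(x <- r) v x ^+ 2.
have P0 : 0 <= P by apply: sumr_ge0 => x _; exact: sqr_ge0.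
(* the discriminant argument: t |-> P t^2 - 2 Q t + S is a sum of squares *)
have quad t : 0 <= P * t ^+ 2 - 2 * Q * t + S.
  have -> : P * t ^+ 2 - 2 * Q * t + S = \sum_(x <- r) (t * u x - v x) ^+ 2.
    rewrite /P /Q /S; elim: r => [|x s IH]; rewrite ?big_nil ?big_cons; first ring.
    by rewrite -IH; ring.
  by apply: sumr_ge0 => x _; exact: sqr_ge0.
have [P_eq0|Pn0] := eqVneq P 0.
  have [->|Qn0] := eqVneq Q 0; first by rewrite expr0n P_eq0 mul0r.
  have := quad ((S + 1) / (2 * Q)); rewrite P_eq0 mul0r.
  have -> : 2 * Q * ((S + 1) / (2 * Q)) = S + 1 by field; rewrite Qn0.
  lra.
have Pp : 0 < P by rewrite lt0r Pn0.
have := quad (Q / P).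
have -> : P * (Q / P) ^+ 2 - 2 * Q * (Q / P) + S = (P * S - Q ^+ 2) / P by field.
rewrite pmulr_lge0 ?invr_gt0 //; lra.
Qed.

Lemma cauchy_schwarz_seq_weighted (k u : T -> F) : (forall x, 0 <= k x) ->
  (\sum_(x <- r) k x * u x) ^+ 2 <= (\sum_(x <- r) k x) * (\sum_(x <- r) k x * u x ^+ 2).
Proof.
move=> k_ge0; have sqrtK x : sqrt (k x) ^+ 2 = k x by rewrite sqr_sqrtr.
have := cauchy_schwarz_seq (fun x => sqrt (k x)) (fun x => sqrt (k x) * u x).
by under eq_bigr do rewrite mulrA -expr2 sqrtK;
   under [X in _ <= X * _]eq_bigr do rewrite sqrtK;
   under [X in _ <= _ * X]eq_bigr do rewrite exprMn sqrtK.
Qed.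

Lemma minkowski_seq (u v : T -> F) :
  sqrt (\sum_(x <- r) (u x + v x) ^+ 2) <=
  sqrt (\sum_(x <- r) u x ^+ 2) + sqrt (\sum_(x <- r) v x ^+ 2).
Proof.
have := cauchy_schwarz_seq u v.
set P := \sum_(x <- r) u x ^+ 2; set S := \sum_(x <- r) v x ^+ 2.
set Q := \sum_(x <- r) u x * v x => cs.
have -> : \sum_(x <- r) (u x + v x) ^+ 2 = P + 2 * Q + S.
  rewrite /P /Q /S; elim: r => [|x s IH]; rewrite ?big_nil ?big_cons; first ring.
  by rewrite IH; ring.
have P0 : 0 <= P by apply: sumr_ge0 => x _; exact: sqr_ge0.
have S0 : 0 <= S by apply: sumr_ge0 => x _; exact: sqr_ge0.
have sP := sqr_sqrtr P0; have sS := sqr_sqrtr S0.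
have sP0 := sqrtr_ge0 P; have sS0 := sqrtr_ge0 S.
have Q_le : Q <= sqrt P * sqrt S.
  rewrite -sqrtrM // (le_trans (ler_norm Q)) // -sqrtr_sqr ler_sqrt //.
  exact: mulr_ge0.
rewrite -(ger0_norm (addr_ge0 sP0 sS0)) -sqrtr_sqr ler_sqrt ?sqr_ge0 //.
rewrite sqrrD sP sS; lra.
Qed.

End FiniteSums.

Lemma normc_ge0 (x : R[i]) : 0 <= normc x.
Proof. by case: x => a b; exact: sqrtr_ge0. Qed.

Lemma normc_sqr (x : R[i]) : normc x ^+ 2 = complex.Re x ^+ 2 + complex.Im x ^+ 2.
Proof. by case: x => a b /=; rewrite sqr_sqrtr // addr_ge0 ?sqr_ge0. Qed.

Lemma hnormE (v : C2) : hnorm v = sqrt (\sum_i normc (v i ord0) ^+ 2).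
Proof. by congr sqrt; apply: eq_bigr => i _; rewrite normc_sqr. Qed.

Lemma hnorm_ge0 (v : C2) : 0 <= hnorm v.
Proof. exact: sqrtr_ge0. Qed.

Lemma normc_le_hnorm (v : C2) i : normc (v i ord0) <= hnorm v.
Proof.
rewrite hnormE -(ger0_norm (normc_ge0 _)) -sqrtr_sqr ler_sqrt ?sumr_ge0 //.
  by rewrite (bigD1 i) //= lerDl sumr_ge0 // => j _; exact: sqr_ge0.
by move=> j _; exact: sqr_ge0.
Qed.

Lemma hnormZ (c : R[i]) (v : C2) : hnorm (c *: v) = normc c * hnorm v.
Proof.
rewrite !hnormE; under eq_bigr do rewrite mxE normcM exprMn.
by rewrite -mulr_sumr sqrtrM ?sqr_ge0 // sqrtr_sqr ger0_norm // normc_ge0.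
Qed.

Lemma hnorm0 : hnorm 0 = 0.
Proof. by have := hnormZ 0 0; rewrite scale0r normc0 mul0r. Qed.

Lemma hnormN (v : C2) : hnorm (- v) = hnorm v.
Proof. by have := hnormZ (-1) v; rewrite scaleN1r normcN normc1 mul1r. Qed.

Lemma hnormD (u v : C2) : hnorm (u + v) <= hnorm u + hnorm v.
Proof.
rewrite !hnormE; apply: le_trans (minkowski_seq _ _ _); rewrite ler_sqrt; last first.
  by apply: sumr_ge0 => i _; exact: sqr_ge0.
apply: ler_sum => i _; rewrite mxE ler_sqr ?nnegrE ?addr_ge0 ?normc_ge0 //.
exact: le_normcD.
Qed.

Lemma hnorm_sum (T : Type) (r : seq T) (f : T -> C2) :
  hnorm (\sum_(x <- r) f x) <= \sum_(x <- r) hnorm (f x).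
Proof.
elim: r => [|x r IH]; first by rewrite !big_nil hnorm0.
by rewrite !big_cons (le_trans (hnormD _ _)) // lerD2l.
Qed.

Lemma hnorm_mulmx_le (M : M2) (v : C2) :
  hnorm (M *m v) <= (\sum_j hnorm (col j M)) * hnorm v.
Proof.
have -> : M *m v = \sum_j v j ord0 *: col j M.
  apply/matrixP => i k; rewrite !mxE summxE ord1; apply: eq_bigr => j _.
  by rewrite !mxE mulrC.
rewrite mulr_suml (le_trans (hnorm_sum _ _)) //; apply: ler_sum => j _.
by rewrite hnormZ mulrC ler_wpM2l ?hnorm_ge0 ?normc_le_hnorm.
Qed.

Lemma ger0_normc_real (c : R) : 0 <= c -> normc (c%:C)%C = c.
Proof. by move=> c0; rewrite /= expr0n addr0 sqrtr_sqr ger0_norm. Qed.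

Lemma opnorm_has_sup (M : M2) :
  has_sup [set hnorm (M *m v) | v in [set v : C2 | hnorm v <= 1]].
Proof.
split; first by exists (hnorm (M *m 0)), 0 => //=; rewrite hnorm0.
exists (\sum_j hnorm (col j M)) => _ [v /= v_le1 <-].
apply: le_trans (hnorm_mulmx_le M v) _.
by rewrite ler_piMr ?sumr_ge0 // => j _; exact: hnorm_ge0.
Qed.

Lemma opnorm_ge0 (M : M2) : 0 <= opnorm M.
Proof.
apply: le_trans (sup_upper_bound (opnorm_has_sup M) _); first exact: (hnorm_ge0 (M *m 0)).
by exists 0 => //=; rewrite hnorm0.
Qed.

Lemma opnorm_le (M : M2) (v : C2) : hnorm (M *m v) <= opnorm M * hnorm v.
Proof.
have [v0|vn0] := eqVneq (hnorm v) 0.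
  by have := hnorm_mulmx_le M v; rewrite v0 !mulr0.
have vp : 0 < hnorm v by rewrite lt0r vn0 hnorm_ge0.
have c0 : 0 <= (hnorm v)^-1 by rewrite invr_ge0 hnorm_ge0.
have : hnorm (M *m (((hnorm v)^-1%:C)%C *: v)) <= opnorm M.
  apply: sup_upper_bound; first exact: opnorm_has_sup.
  by exists (((hnorm v)^-1%:C)%C *: v) => //=; rewrite hnormZ ger0_normc_real // mulVf.
by rewrite -scalemxAr hnormZ ger0_normc_real // mulrC ler_pdivrMr.
Qed.

Section FiniteSubsums.
Variables (T : choiceType) (L : set T).

Lemma esum_le_EFin (h : T -> R) (c : R) :
  (forall F, finite_set F -> F `<=` L -> \sum_(x \in F) h x <= c) ->
  (\esum_(x in L) (h x)%:E <= c%:E)%E.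
Proof.
move=> H; apply: ge_ereal_sup => _ [F [fF FL] <-].
by rewrite fsumEFin // lee_fin; exact: H.
Qed.

Lemma fsum_le_esum (h : T -> R) (F : set T) : finite_set F -> F `<=` L ->
  ((\sum_(x \in F) h x)%:E <= \esum_(x in L) (h x)%:E)%E.
Proof. by move=> fF FL; rewrite -fsumEFin //; apply: ereal_sup_ubound; exists F. Qed.

Lemma esum_fineK (h : T -> R) (c : R) : (forall x, L x -> 0 <= h x) ->
  (\esum_(x in L) (h x)%:E <= c%:E)%E ->
  \esum_(x in L) (h x)%:E = (fine (\esum_(x in L) (h x)%:E))%:E.
Proof.
move=> h0 hc; rewrite fineK // ge0_fin_numE ?(le_lt_trans hc) ?ltry //.
by apply: esum_ge0 => x Lx; rewrite lee_fin h0.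
Qed.

Lemma fsum_le (F : set T) (h1 h2 : T -> R) : finite_set F ->
  (forall x, F x -> h1 x <= h2 x) -> \sum_(x \in F) h1 x <= \sum_(x \in F) h2 x.
Proof.
move=> fF H; rewrite !fsbig_finite //= big_seq [X in _ <= X]big_seq.
by apply: ler_sum => x; rewrite in_fset_set // inE; exact: H.
Qed.

Lemma fsum_le_subset (h : T -> R) (F0 F : set T) : finite_set F0 -> finite_set F ->
  F0 `<=` F -> (forall x, F x -> 0 <= h x) -> \sum_(x \in F0) h x <= \sum_(x \in F) h x.
Proof.
move=> f0 f F0F h0; rewrite -lee_fin -!fsumEFin //.
apply: lee_fsum_nneg_subset => //; first exact/subsetP.
by move=> t; rewrite inE => /andP[_]; rewrite inE lee_fin => /h0.
Qed.

Definition fsum_cvg (g : T -> R) (s : R) : Prop :=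
  forall eps, 0 < eps -> exists F0, [/\ finite_set F0, F0 `<=` L &
    forall F, finite_set F -> F0 `<=` F -> F `<=` L -> `|\sum_(x \in F) g x - s| < eps].

Lemma esum_fsum_cvg (h : T -> R) (S : R) : (forall x, L x -> 0 <= h x) ->
  \esum_(x in L) (h x)%:E = S%:E -> fsum_cvg h S.
Proof.
move=> h0 hS eps e0.
have : ((S - eps)%:E < \esum_(x in L) (h x)%:E)%E by rewrite hS lte_fin gtrBl.
move=> /ereal_sup_gt [_ [F0 [f0 F0L] <-]]; rewrite fsumEFin // lte_fin => SF0.
exists F0; split => // F fF F0F FL.
have F_le : \sum_(x \in F) h x <= S by rewrite -lee_fin -hS; exact: fsum_le_esum.
have := fsum_le_subset f0 fF F0F (fun x Fx => h0 x (FL x Fx)).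
rewrite ler0_norm; lra.
Qed.

(* split [g] into its positive and negative parts, both summable *)
Lemma summable_fsum_cvg (g : T -> R) (c : R) :
  (\esum_(x in L) (`|g x|)%:E <= c%:E)%E -> exists s, fsum_cvg g s.
Proof.
move=> hc; pose p x := (`|g x| + g x) / 2; pose n x := (`|g x| - g x) / 2.
have gn x : - g x <= `|g x| by rewrite -normrN ler_norm.
have gp x : g x <= `|g x| by rewrite ler_norm.
have p0 x : L x -> 0 <= p x by move=> _; rewrite /p; have := gn x; lra.
have n0 x : L x -> 0 <= n x by move=> _; rewrite /n; have := gp x; lra.
have pc : (\esum_(x in L) (p x)%:E <= c%:E)%E.
  by apply: le_trans hc; apply: le_esum => x _; rewrite lee_fin /p; have := gp x; lra.
have nc : (\esum_(x in L) (n x)%:E <= c%:E)%E.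
  by apply: le_trans hc; apply: le_esum => x _; rewrite lee_fin /n; have := gn x; lra.
have Hp := esum_fsum_cvg p0 (esum_fineK p0 pc).
have Hn := esum_fsum_cvg n0 (esum_fineK n0 nc).
set Sp := fine _ in Hp; set Sn := fine _ in Hn.
exists (Sp - Sn) => eps e0; have e2 : 0 < eps / 2 by rewrite divr_gt0.
have [Fp [fp FpL {}Hp]] := Hp _ e2; have [Fn [fn FnL {}Hn]] := Hn _ e2.
exists (Fp `|` Fn); split; first by rewrite finite_setU.
  by move=> x [/FpL|/FnL].
move=> F fF F0F FL; have := Hp F fF (subset_trans (@subsetUl _ _ _) F0F) FL.
have := Hn F fF (subset_trans (@subsetUr _ _ _) F0F) FL.
have -> : \sum_(x \in F) g x = \sum_(x \in F) p x - \sum_(x \in F) n x.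
  by rewrite !fsbig_finite //= -sumrB; apply: eq_bigr => x _; rewrite /p /n; field.
set P := \sum_(x \in F) p x; set N := \sum_(x \in F) n x => HN HP.
have := ler_normD (P - Sp) (Sn - N); rewrite distrC in HN.
have -> : P - Sp + (Sn - N) = P - N - (Sp - Sn) by ring.
lra.
Qed.

End FiniteSubsums.

Definition coordR (p : 'I_2 * bool) (v : C2) : R :=
  if p.2 then complex.Re (v p.1 ord0) else complex.Im (v p.1 ord0).

Fact coordR_is_zmod_morphism p : zmod_morphism (coordR p).
Proof.
move=> u v; rewrite /coordR !mxE.
by case: p.2; case: (u p.1 ord0) => a b; case: (v p.1 ord0).
Qed.

HB.instance Definition _ p :=
  GRing.isZmodMorphism.Build C2 R (coordR p) (coordR_is_zmod_morphism p).

Lemma normr_coordR_le (p : 'I_2 * bool) (v : C2) : `|coordR p v| <= hnorm v.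
Proof.
apply: le_trans (normc_le_hnorm v p.1); rewrite /coordR.
case: (v p.1 ord0) => a b /=; rewrite -sqrtr_sqr ler_sqrt ?addr_ge0 ?sqr_ge0 //.
by case: p.2; rewrite ?lerDl ?lerDr sqr_ge0.
Qed.

Lemma normc_le_ReIm (x : R[i]) : normc x <= `|complex.Re x| + `|complex.Im x|.
Proof.
case: x => a b /=; rewrite -(ger0_norm (addr_ge0 (normr_ge0 a) (normr_ge0 b))).
rewrite -sqrtr_sqr ler_sqrt ?sqr_ge0 // sqrrD -[a ^+ 2]real_normK ?num_real //.
by rewrite -[b ^+ 2]real_normK ?num_real // lerD2r lerDl mulrn_wge0 ?mulr_ge0.
Qed.

Lemma hnorm_le_coordR (v : C2) : hnorm v <= \sum_p `|coordR p v|.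
Proof.
have hsum : hnorm v <= \sum_i normc (v i ord0).
  rewrite hnormE -(ger0_norm (sumr_ge0 _ (fun i _ => normc_ge0 (v i ord0)))).
  rewrite -sqrtr_sqr ler_sqrt ?sqr_ge0 //.
  elim: (index_enum _) => [|i r IH]; rewrite ?big_nil ?big_cons ?expr0n //=.
  have : 0 <= \sum_(j <- r) normc (v j ord0) by apply: sumr_ge0 => j _; exact: normc_ge0.
  have := normc_ge0 (v i ord0); nra.
rewrite (le_trans hsum) // -(pair_big xpredT xpredT (fun i b => `|coordR (i, b) v|)) /=.
by apply: ler_sum => i _; rewrite big_bool /coordR /=; exact: normc_le_ReIm.
Qed.

Lemma HasSum_of_summable (T : choiceType) (L : set T) (f : T -> C2) (c : R) :
  (\esum_(x in L) (hnorm (f x))%:E <= c%:E)%E -> exists s, HasSum L f s.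
Proof.
move=> hc.
have : forall p, exists tp, fsum_cvg L (fun x => coordR p (f x)) tp.
  move=> p; apply: (@summable_fsum_cvg _ _ _ c).
  by apply: le_trans hc; apply: le_esum => x _; rewrite lee_fin normr_coordR_le.
case/fin_all_exists => t Ht.
pose s : C2 := \col_i (Complex (t (i, true)) (t (i, false)))%C.
have coordR_s p : coordR p s = t p by rewrite /coordR mxE; case: p => i [].
exists s => eps e0; have e4 : 0 < eps / 4 by rewrite divr_gt0.
have [F0 HF0] := fin_all_exists (fun p => Ht p _ e4).
exists (\bigcup_(p in setT) F0 p); split.
- by apply: bigcup_finite => [|p _]; [exact: finite_finset | case: (HF0 p)].
- by apply: bigcup_sub => p _; case: (HF0 p).
move=> F fF F0F FL; apply: le_lt_trans (hnorm_le_coordR _) _.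
have -> : eps = \sum_(p : 'I_2 * bool) eps / 4.
  by rewrite sumr_const card_prod card_ord card_bool; field.
apply: ltr_sum => [|p _]; first by apply/hasP; exists (ord0, true); rewrite ?mem_index_enum.
rewrite raddfB /= coordR_s fsbig_finite // raddf_sum -fsbig_finite //.
case: (HF0 p) => _ _; apply => //.
by apply: (subset_trans _ F0F); exact: bigcup_sup.
Qed.

Lemma hnorm_le_of_HasSum (T : choiceType) (L : set T) (f : T -> C2) (s : C2) (c : R) :
  HasSum L f s ->
  (forall F, finite_set F -> F `<=` L -> \sum_(x \in F) hnorm (f x) <= c) ->
  hnorm s <= c.
Proof.
move=> Hs Hc; apply/ler_addgt0Pr => e e0.
have [F0 [fF0 F0L HF0]] := Hs e e0.
have := HF0 F0 fF0 (@subset_refl _ F0) F0L.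
have : hnorm (\sum_(x \in F0) f x) <= c.
  apply: le_trans (Hc F0 fF0 F0L); rewrite !fsbig_finite //; exact: hnorm_sum.
have := hnormD (\sum_(x \in F0) f x) (s - \sum_(x \in F0) f x).
rewrite addrC subrK -[s - _]opprB hnormN; lra.
Qed.

Section SchurTest.
Variables (T : choiceType) (L : set T) (K : T -> T -> R) (y : T -> R) (M Y : R).
Hypotheses (K_ge0 : forall a b, 0 <= K a b) (y_ge0 : forall b, 0 <= y b).
Hypothesis M_ge0 : 0 <= M.
Hypothesis row_le : forall a, L a -> (\esum_(b in L) (K a b)%:E <= M%:E)%E.
Hypothesis col_le : forall b, L b -> (\esum_(a in L) (K a b)%:E <= M%:E)%E.
Hypothesis esum_ysqr : \esum_(b in L) (y b ^+ 2)%:E = Y%:E.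

Let fsum_ysqr_le G : finite_set G -> G `<=` L -> \sum_(b \in G) y b ^+ 2 <= Y.
Proof. by move=> fG GL; rewrite -lee_fin -esum_ysqr; exact: fsum_le_esum. Qed.

Let fsum_row_le a G : L a -> finite_set G -> G `<=` L -> \sum_(b \in G) K a b <= M.
Proof. by move=> La fG GL; rewrite -lee_fin (le_trans _ (row_le La)) ?fsum_le_esum. Qed.

Let fsum_col_le b F : L b -> finite_set F -> F `<=` L -> \sum_(a \in F) K a b <= M.
Proof. by move=> Lb fF FL; rewrite -lee_fin (le_trans _ (col_le Lb)) ?fsum_le_esum. Qed.

Let K_le a b : L a -> L b -> K a b <= M.
Proof.
move=> La Lb; have bL : [set b] `<=` L by move=> x ->.
by have := fsum_row_le La (finite_set1 b) bL; rewrite fsbig_set1.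
Qed.

Definition schur_row2 a := fine (\esum_(b in L) (K a b * y b ^+ 2)%:E).
Definition schur_row a := fine (\esum_(b in L) (K a b * y b)%:E).

Let schur_row2E a : L a -> \esum_(b in L) (K a b * y b ^+ 2)%:E = (schur_row2 a)%:E.
Proof.
move=> La; apply: (@esum_fineK _ _ _ (M * Y)) => [b _|]; first by rewrite mulr_ge0 ?sqr_ge0.
apply: esum_le_EFin => G fG GL; apply: (@le_trans _ _ (\sum_(b \in G) M * y b ^+ 2)).
  by apply: fsum_le => // b Gb; apply: ler_wpM2r; [exact: sqr_ge0 | exact: K_le (GL b Gb)].
by rewrite -mulr_fsumr; apply: ler_wpM2l => //; exact: fsum_ysqr_le.
Qed.

Let schur_row2_ge0 a : L a -> 0 <= schur_row2 a.
Proof.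
move=> La; rewrite -lee_fin -schur_row2E //.
by apply: esum_ge0 => b _; rewrite lee_fin mulr_ge0 ?sqr_ge0.
Qed.

Let fsum_row_le_sqrt a G : L a -> finite_set G -> G `<=` L ->
  \sum_(b \in G) K a b * y b <= sqrt (M * schur_row2 a).
Proof.
move=> La fG GL; have sum_ge0 : 0 <= \sum_(b \in G) K a b * y b.
  by apply: fsumr_ge0 => b _; exact: mulr_ge0.
rewrite -(ger0_norm sum_ge0) -sqrtr_sqr ler_sqrt ?sqr_ge0 //.
apply: le_trans (_ : (\sum_(b \in G) K a b) * (\sum_(b \in G) K a b * y b ^+ 2) <= _).
  by rewrite !fsbig_finite //=; exact: cauchy_schwarz_seq_weighted.
apply: ler_pM; rewrite ?fsum_row_le //; first by apply: fsumr_ge0 => b _.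
  by apply: fsumr_ge0 => b _; rewrite mulr_ge0 ?sqr_ge0.
  by rewrite -lee_fin -schur_row2E // fsum_le_esum.
by rewrite mulr_ge0 ?schur_row2_ge0.
Qed.

Lemma schur_rowE a : L a -> \esum_(b in L) (K a b * y b)%:E = (schur_row a)%:E.
Proof.
move=> La; apply: (@esum_fineK _ _ _ (sqrt (M * schur_row2 a))) => [b _|].
  exact: mulr_ge0.
by apply: esum_le_EFin => G fG GL; exact: fsum_row_le_sqrt.
Qed.

Lemma fsum_le_schur_row a G : L a -> finite_set G -> G `<=` L ->
  \sum_(b \in G) K a b * y b <= schur_row a.
Proof. by move=> La fG GL; rewrite -lee_fin -schur_rowE // fsum_le_esum. Qed.

Let schur_row_sqr_le a : L a -> schur_row a ^+ 2 <= M * schur_row2 a.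
Proof.
move=> La; have r_ge0 : 0 <= schur_row a.
  by have := fsum_le_schur_row La (finite_set0 T) (@sub0set _ L); rewrite fsbig_set0.
have : schur_row a <= sqrt (M * schur_row2 a).
  by rewrite -lee_fin -schur_rowE //; apply: esum_le_EFin => G fG GL; exact: fsum_row_le_sqrt.
by rewrite -ler_sqr ?nnegrE ?sqrtr_ge0 // sqr_sqrtr // mulr_ge0 ?schur_row2_ge0.
Qed.

(* exchanging the two sums is where the column bound enters *)
Let fsum_schur_row2_le F : finite_set F -> F `<=` L -> \sum_(a \in F) schur_row2 a <= M * Y.
Proof.
move=> fF FL; rewrite -lee_fin -fsumEFin //.
rewrite (eq_fsbigr (fun a => \esum_(b in L) (K a b * y b ^+ 2)%:E)); last first.
  by move=> a; rewrite inE => Fa; rewrite schur_row2E //; exact: FL.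
rewrite fsbig_finite //= -esum_sum => [|b a _ _]; last by rewrite lee_fin mulr_ge0 ?sqr_ge0.
under eq_esum do rewrite sumEFin -fsbig_finite //.
apply: esum_le_EFin => G fG GL; apply: (@le_trans _ _ (\sum_(b \in G) M * y b ^+ 2)).
  apply: fsum_le => // b Gb.
  rewrite -mulr_fsuml; apply: ler_wpM2r; first exact: sqr_ge0.
  exact: fsum_col_le (GL b Gb) fF FL.
by rewrite -mulr_fsumr; apply: ler_wpM2l => //; exact: fsum_ysqr_le.
Qed.

Lemma esum_schur_row_sqr_le : (\esum_(a in L) (schur_row a ^+ 2)%:E <= (M ^+ 2 * Y)%:E)%E.
Proof.
apply: esum_le_EFin => F fF FL; apply: (@le_trans _ _ (\sum_(a \in F) M * schur_row2 a)).
  by apply: fsum_le => // a Fa; apply: schur_row_sqr_le; exact: FL.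
rewrite -mulr_fsumr expr2 -mulrA; apply: ler_wpM2l => //; exact: fsum_schur_row2_le.
Qed.

Lemma schur_test (f : T -> T -> C2) (W : T -> R) :
  (forall a, L a -> 0 < W a) ->
  (forall a b, L a -> L b -> hnorm (f a b) * W a <= K a b * y b) ->
  exists w : T -> C2, (forall a, L a -> HasSum L (f a) (w a)) /\
    (\esum_(a in L) ((hnorm (w a) * W a) ^+ 2)%:E <= (M ^+ 2 * Y)%:E)%E.
Proof.
move=> W_gt0 f_le.
have fsum_f_le a : L a -> forall G, finite_set G -> G `<=` L ->
    \sum_(b \in G) hnorm (f a b) <= schur_row a / W a.
  move=> La G fG GL; rewrite ler_pdivlMr ?W_gt0 // mulr_fsuml.
  apply: le_trans (fsum_le_schur_row La fG GL); apply: fsum_le => // b Gb.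
  exact: f_le (GL b Gb).
have : forall a, exists s, L a -> HasSum L (f a) s.
  move=> a; have [La|nLa] := pselect (L a); last by exists 0.
  have [s Hs] := HasSum_of_summable (esum_le_EFin (fsum_f_le a La)).
  by exists s.
case/choice => w Hw; exists w; split => //.
apply: le_trans esum_schur_row_sqr_le; apply: le_esum => a La.
have w_le : hnorm (w a) * W a <= schur_row a.
  by rewrite -ler_pdivlMr ?W_gt0 //; apply: hnorm_le_of_HasSum (Hw a La) (fsum_f_le a La).
have w_ge0 : 0 <= hnorm (w a) * W a by rewrite mulr_ge0 ?hnorm_ge0 ?ltW ?W_gt0.
by rewrite lee_fin ler_sqr ?nnegrE // (le_trans w_ge0 w_le).
Qed.

End SchurTest.

Lemma mulr_le_of_normr_le (t u g v : R) : `|t| <= g -> `|u| <= v -> t * u <= g * v.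
Proof.
move=> tg uv; rewrite (le_trans (ler_norm _)) // normrM.
by rewrite ler_pM ?normr_ge0.
Qed.

Lemma powRE_gt0 (x t : R) : 0 < x -> x `^ t = expR (t * ln x).
Proof. by move=> x0; rewrite /powR gt_eqF. Qed.

Lemma powR_le_comparable (x y c t g : R) : 0 < x -> 0 < y ->
  x <= c * y -> y <= c * x -> `|t| <= g -> x `^ t <= c `^ g * y `^ t.
Proof.
move=> x0 y0 xy yx tg.
have c0 : 0 < c by rewrite -(pmulr_lgt0 _ y0) (lt_le_trans x0).
have lnxy : `|ln x - ln y| <= ln c.
  have lnx : ln x <= ln c + ln y by rewrite -lnM ?posrE // ler_ln ?posrE ?mulr_gt0.
  have lny : ln y <= ln c + ln x by rewrite -lnM ?posrE // ler_ln ?posrE ?mulr_gt0.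
  by rewrite ler_norml; apply/andP; split; lra.
rewrite !powRE_gt0 // -exp.expRD exp.ler_expR -lerBlDr -mulrBr.
exact: mulr_le_of_normr_le.
Qed.

Section LatticeWeights.
Variable d : nat.
Implicit Types a b : Zd d.

Lemma zabsD a b : zabs (a + b) <= zabs a + zabs b.
Proof.
rewrite /zabs; under eq_bigr do rewrite mxE intrD.
exact: minkowski_seq.
Qed.

Lemma zabsN a : zabs (- a) = zabs a.
Proof. by rewrite /zabs; under eq_bigr do rewrite mxE intrN sqrrN. Qed.

Lemma zabs_dist_le_zdist a b : `|zabs a - zabs b| <= zdist a b.
Proof.
have h1 : zabs a <= zabs (a - b) + zabs b by have := zabsD (a - b) b; rewrite subrK.
have h2 : zabs a <= zabs (a + b) + zabs b.
  by have := zabsD (a + b) (- b); rewrite addrK zabsN.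
have h3 : zabs b <= zabs (a - b) + zabs a.
  by have := zabsD (b - a) a; rewrite subrK -opprB zabsN.
have h4 : zabs b <= zabs (a + b) + zabs a.
  by have := zabsD (a + b) (- a); rewrite zabsN addrC addKr.
rewrite /zdist ler_norml lerNl opprB !le_min; apply/andP; split; apply/andP; split; lra.
Qed.

Lemma zdistC a b : zdist a b = zdist b a.
Proof. by rewrite /zdist -[a - b]opprB zabsN [a + b]addrC. Qed.

Lemma zbr_ge1 a : 1 <= zbr a.
Proof. by rewrite /zbr le_max lexx orbT. Qed.

Lemma zbr_le_zdist a b : zbr a <= 2 * Num.max (zdist a b) 1 * zbr b.
Proof.
have := zabs_dist_le_zdist a b; rewrite ler_norml => /andP[_ ab].
have D1 : 1 <= Num.max (zdist a b) 1 by rewrite le_max lexx orbT.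
have zD : zdist a b <= Num.max (zdist a b) 1 by rewrite le_max lexx.
have zb1 := zbr_ge1 b; have zab : zabs b <= zbr b by rewrite /zbr le_max lexx.
have : zbr a <= zbr b + Num.max (zdist a b) 1.
  by rewrite /zbr ge_max; apply/andP; split; rewrite -/(zbr b); lra.
nra.
Qed.

Definition yweight (t1 t2 : R) a : R := expR (t1 * zabs a) * zbr a `^ t2.

Lemma yweight_gt0 t1 t2 a : 0 < yweight t1 t2 a.
Proof.
by rewrite /yweight mulr_gt0 ?expR_gt0 // powR_gt0 // (lt_le_trans ltr01 (zbr_ge1 a)).
Qed.

Lemma yweight_sqr t1 t2 a (h : R) :
  h ^+ 2 * expR (2 * t1 * zabs a) * zbr a `^ (2 * t2) = (h * yweight t1 t2 a) ^+ 2.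
Proof.
have zbr_gt0 : 0 < zbr a by apply: lt_le_trans (zbr_ge1 a).
have expR_sqr x : expR x ^+ 2 = expR (2 * x) by rewrite expr2 -exp.expRD mulr2n mulrDl mul1r.
by rewrite /yweight !powRE_gt0 // !exprMn !expR_sqr !mulrA.
Qed.

Lemma yweight_le (C g1 g2 kappa t1 t2 : R) a b :
  `|t1| <= g1 -> `|t2| <= g2 -> 0 <= kappa -> 2 `^ g2 <= C ->
  yweight t1 t2 a <= eweight C g1 g2 kappa a b * yweight t1 t2 b.
Proof.
(* [eweight] is stated with Stdlib's [Rmult], which [ring] does not see through *)
move=> t1g t2g k0 C_ge; rewrite /eweight /yweight !RmultE.
set D := Num.max (zdist a b) 1; set m := Num.min (zbr a) (zbr b).
have zbr_gt0 (c : Zd d) : 0 < zbr c by apply: lt_le_trans (zbr_ge1 c).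
have D_ge0 : 0 <= D by rewrite le_max ler01 orbT.
have m1 : 1 <= m by rewrite le_min !zbr_ge1.
have exp_le : expR (t1 * zabs a) <= expR (g1 * zdist a b) * expR (t1 * zabs b).
  rewrite -exp.expRD exp.ler_expR -lerBlDr -mulrBr.
  exact: mulr_le_of_normr_le (zabs_dist_le_zdist a b).
have pow_le : zbr a `^ t2 <= 2 `^ g2 * (D `^ g2 * zbr b `^ t2).
  rewrite mulrA -powRM //; apply: powR_le_comparable => //; first exact: zbr_le_zdist.
  by rewrite /D zdistC; exact: zbr_le_zdist.
apply: le_trans (ler_pM _ _ exp_le pow_le) _; rewrite ?powR_ge0 ?expR_ge0 //.
set P := expR (g1 * zdist a b) * expR (t1 * zabs b) * D `^ g2 * zbr b `^ t2.
have P_ge0 : 0 <= P by rewrite !mulr_ge0 ?expR_ge0 ?powR_ge0.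
have kappa_ge : 1 <= m `^ kappa by rewrite -(powRr0 m) ler_powR.
have C_le : 2 `^ g2 <= C * m `^ kappa.
  by rewrite (le_trans C_ge) // ler_peMr // (le_trans (powR_ge0 _ _) C_ge).
rewrite [leLHS](_ : _ = 2 `^ g2 * P); last by rewrite /P; ring.
rewrite [leRHS](_ : _ = C * m `^ kappa * P); last by rewrite /P; ring.
exact: ler_wpM2r.
Qed.

End LatticeWeights.

Lemma eweight_ge0 (C g1 g2 kappa : R) d (a b : Zd d) :
  0 <= C -> 0 <= eweight C g1 g2 kappa a b.
Proof. by move=> C_ge0; rewrite /eweight !RmultE !mulr_ge0 ?expR_ge0 ?powR_ge0. Qed.

Lemma mulmx_yweight_le (C g1 g2 kappa t1 t2 : R) d (a b : Zd d) (M : M2) (v : C2) :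
  `|t1| <= g1 -> `|t2| <= g2 -> 0 <= kappa -> 2 `^ g2 <= C ->
  hnorm (M *m v) * yweight t1 t2 a <=
  opnorm M * eweight C g1 g2 kappa a b * (hnorm v * yweight t1 t2 b).
Proof.
move=> t1g t2g k0 C_ge; rewrite mulrACA.
apply: ler_pM; [exact: hnorm_ge0 | exact/ltW/yweight_gt0 | exact: opnorm_le |].
exact: yweight_le.
Qed.

Section MatrixNorm.
Variables (C g1 g2 kappa : R) (d : nat) (L : set (Zd d)) (A : Zd d -> Zd d -> M2).
Hypothesis C_ge0 : 0 <= C.

Let K a b := opnorm (A a b) * eweight C g1 g2 kappa a b.

Let K_ge0 a b : 0 <= K a b.
Proof. by rewrite /K mulr_ge0 ?opnorm_ge0 ?eweight_ge0. Qed.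

Let row_le_mnormE a : L a -> (\esum_(b in L) (K a b)%:E <= mnormE C g1 g2 kappa L A)%E.
Proof.
move=> La; rewrite /mnormE le_max; apply/orP; left.
by apply: ereal_sup_ubound; exists a.
Qed.

Let col_le_mnormE b : L b -> (\esum_(a in L) (K a b)%:E <= mnormE C g1 g2 kappa L A)%E.
Proof.
move=> Lb; rewrite /mnormE le_max; apply/orP; right.
by apply: ereal_sup_ubound; exists b.
Qed.

Lemma mnorm_ge0 : 0 <= mnorm C g1 g2 kappa L A.
Proof.
have [[a La]|L0] := pselect (exists a, L a).
  apply: fine_ge0; apply: le_trans (row_le_mnormE La).
  by apply: esum_ge0 => b _; rewrite lee_fin K_ge0.
rewrite /mnorm /mnormE (_ : L = set0) ?image_set0 ?ereal_sup0 ?maxxx //.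
by apply/seteqP; split => // x Lx; apply: L0; exists x.
Qed.

Let mnormE_fin a : inM C g1 g2 kappa L A -> L a ->
  mnormE C g1 g2 kappa L A = (mnorm C g1 g2 kappa L A)%:E.
Proof.
move=> hA La; rewrite fineK // ge0_fin_numE //.
by apply: le_trans (row_le_mnormE La); apply: esum_ge0 => b _; rewrite lee_fin K_ge0.
Qed.

Lemma row_le_mnorm : inM C g1 g2 kappa L A -> forall a, L a ->
  (\esum_(b in L) (K a b)%:E <= (mnorm C g1 g2 kappa L A)%:E)%E.
Proof. by move=> hA a La; rewrite -(mnormE_fin hA La) row_le_mnormE. Qed.

Lemma col_le_mnorm : inM C g1 g2 kappa L A -> forall b, L b ->
  (\esum_(a in L) (K a b)%:E <= (mnorm C g1 g2 kappa L A)%:E)%E.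
Proof. by move=> hA b Lb; rewrite -(mnormE_fin hA Lb) col_le_mnormE. Qed.

End MatrixNorm.

Section WeightedNorm.
Variables (t1 t2 : R) (d : nat) (L : set (Zd d)).

Lemma ynorm2_yweight (z : Zd d -> C2) :
  ynorm2 t1 t2 L z = \esum_(a in L) ((hnorm (z a) * yweight t1 t2 a) ^+ 2)%:E.
Proof. by apply: eq_esum => a _; rewrite yweight_sqr. Qed.

Lemma inY_ynorm2E (z : Zd d -> C2) :
  inY t1 t2 L z -> ynorm2 t1 t2 L z = (ynorm t1 t2 L z ^+ 2)%:E.
Proof.
move=> hz; have ge0 : (0 <= ynorm2 t1 t2 L z)%E.
  by rewrite ynorm2_yweight; apply: esum_ge0 => a _; rewrite lee_fin sqr_ge0.
by rewrite /ynorm sqr_sqrtr ?fine_ge0 // fineK // ge0_fin_numE.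
Qed.

Lemma ynorm_le_of_ynorm2_le (z : Zd d -> C2) (c : R) : 0 <= c ->
  (ynorm2 t1 t2 L z <= (c ^+ 2)%:E)%E -> inY t1 t2 L z /\ ynorm t1 t2 L z <= c.
Proof.
move=> c_ge0 hc; have hz : inY t1 t2 L z by rewrite /inY (le_lt_trans hc) ?ltry.
split => //; move: hc; rewrite inY_ynorm2E // lee_fin ler_sqr // nnegrE.
exact: sqrtr_ge0.
Qed.

End WeightedNorm.

Theorem proposition2p3 :
  forall (g2 kappa : R), 0 <= g2 -> 0 <= kappa ->
  exists C0 : R, 1 <= C0 /\
  forall C : R, C0 <= C ->
  forall (d : nat), leq 1 d ->
  forall (L : set (Zd d)) (g1 tg1 tg2 : R),
    0 <= g1 ->
    - g1 <= tg1 -> tg1 <= g1 ->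
    - g2 <= tg2 -> tg2 <= g2 ->
  forall (A : Zd d -> Zd d -> M2) (z : Zd d -> C2),
    inM C g1 g2 kappa L A ->
    inY tg1 tg2 L z ->
    exists w : Zd d -> C2,
      [/\ forall a, L a -> HasSum L (fun b => A a b *m z b) (w a),
          inY tg1 tg2 L w &
          ynorm tg1 tg2 L w <= mnorm C g1 g2 kappa L A * ynorm tg1 tg2 L z].
Proof.
move=> g2 kappa g2_ge0 kappa_ge0; exists (Num.max 1 (2 `^ g2)).
split=> [|C C_ge d _ L g1 t1 t2 _ t1_ge t1_le t2_ge t2_le A z hA hz].
  by rewrite le_max lexx.
have C_ge2 : 2 `^ g2 <= C by rewrite (le_trans _ C_ge) // le_max lexx orbT.
have C_ge0 : 0 <= C := le_trans (powR_ge0 _ _) C_ge2.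
have t1g : `|t1| <= g1 by rewrite ler_norml t1_ge t1_le.
have t2g : `|t2| <= g2 by rewrite ler_norml t2_ge t2_le.
have M_ge0 : 0 <= mnorm C g1 g2 kappa L A by exact: mnorm_ge0.
have K_ge0 a b : 0 <= opnorm (A a b) * eweight C g1 g2 kappa a b.
  by rewrite mulr_ge0 ?opnorm_ge0 ?eweight_ge0.
have y_ge0 b : 0 <= hnorm (z b) * yweight t1 t2 b.
  by rewrite mulr_ge0 ?hnorm_ge0 ?ltW ?yweight_gt0.
have [w [Hw w_le]] := schur_test K_ge0 y_ge0 M_ge0 (row_le_mnorm C_ge0 hA)
  (col_le_mnorm C_ge0 hA) (etrans (esym (ynorm2_yweight t1 t2 L z)) (inY_ynorm2E hz))
  (fun a _ => yweight_gt0 t1 t2 a)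
  (fun a b _ _ => mulmx_yweight_le a b (A a b) (z b) t1g t2g kappa_ge0 C_ge2).
rewrite -exprMn -ynorm2_yweight in w_le.
have [hw w_norm] := ynorm_le_of_ynorm2_le (mulr_ge0 M_ge0 (sqrtr_ge0 _)) w_le.
by exists w.
Qed.
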